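(* Let $g\in\omega^\omega$ with $g(k)>0$ for all $k$ and $g$ tending to infinity. Then $\mathfrak c_{\omega,g}=\mathfrak c_{\omega,\mathcal C}$.
   Context: A slalom is a sequence $S=\langle S_k\mid k<\omega\rangle$ of finite subsets of $\omega$; $x\in\omega^\omega$ is captured by $S$, written $x\in^*S$, if $x(k)\in S_k$ for all but finitely many $k$. $\mathfrak c_{\omega,g}:=\min\{|\mathcal S|:\mathcal S\subseteq\prod_{k<\omega}[\omega]^{\le g(k)},\ \forall x\in\omega^\omega\ \exists S\in\mathcal S: x\in^*S\}$. $\mathcal C$ is the set of all slaloms $S$ with $\sum_{k\ge1}|S_k|/k^2<\infty$, and $\mathfrak c_{\omega,\mathcal C}:=\min\{|\mathcal S|:\mathcal S\subseteq\mathcal C,\ \forall x\in\omega^\omega\ \exists S\in\mathcal S: x\in^*S\}$. *)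

From mathcomp Require Import all_boot all_algebra.
From mathcomp Require Import finmap.
From mathcomp Require Import boolp classical_sets cardinality.
Set Implicit Arguments. Unset Strict Implicit. Unset Printing Implicit Defensive.
Import GRing.Theory Num.Theory.
Local Open Scope fset_scope.

Definition slalom := nat -> {fset nat}.

Definition captured (x : nat -> nat) (S : slalom) : Prop :=
  exists N, forall k, (N <= k)%N -> x k \in S k.

Definition g_slalom (g : nat -> nat) (S : slalom) : Prop :=
  forall k, (#|` S k| <= g k)%N.

(* S \in C : sum_{k>=1} |S_k| / k^2 < oo  (nonnegative terms: bounded partial sums) *)
Definition in_C (S : slalom) : Prop :=
  exists M : rat, forall n : nat,
    (\sum_(1 <= k < n) ((#|` S k|)%:R / (k ^ 2)%:R) <= M)%R.

Definition covering (P : slalom -> Prop) (F : set slalom) : Prop :=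
  (forall S, F S -> P S) /\ (forall x : nat -> nat, exists S, F S /\ captured x S).

(* Both inequalities come from one construction: a map on slaloms, applied to a
   covering family, whose image is a covering family of the other kind and is
   no larger.  Code the first [B n] values of [x] as a single number.  Given a
   slalom [S] and levels [idx k] tending to infinity, the new slalom at level
   [k] decodes the [k]-th coordinate of every code in [S (idx k)]; if [S]
   captures the codes of [x], this captures [x] as soon as [k < B (idx k)].
   Its size at [k] is that of [S] at [idx k], so the growth of [idx] transfers
   size bounds: from g-slaloms to [C] take [idx k] the largest [j] with
   [g j (j+1)(j+2) <= k], making the sizes summable against [1/k^2]; from [C]
   to g-slaloms, where [|S j| = O(j^2)], take the largest [j] with
   [j^3 <= g k]. *)

From mathcomp Require Import all_boot all_order all_algebra.
From mathcomp Require Import finmap.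
From mathcomp Require Import boolp classical_sets cardinality.
From mathcomp Require Import ring lra zify.
Set Implicit Arguments.
Unset Strict Implicit.
Unset Printing Implicit Defensive.
Import Order.TTheory GRing.Theory Num.Theory.
Local Open Scope fset_scope.

(* [0] when no [j <= k] satisfies [P]. *)
Definition last_index (P : pred nat) (k : nat) : nat := \max_(j < k.+1 | P j) j.

Lemma last_index_leq (P : pred nat) k : (last_index P k <= k)%N.
Proof. by apply/bigmax_leqP => j _; rewrite -ltnS. Qed.

Lemma leq_last_index (P : pred nat) n k :
  (n <= k)%N -> P n -> (n <= last_index P k)%N.
Proof. by rewrite -ltnS => ltnk Pn; apply: (leq_bigmax_cond (Ordinal ltnk)). Qed.

Lemma last_indexP (P : pred nat) k : P 0%N -> P (last_index P k).
Proof. by move=> P0; apply: (big_ind P) => // i j; rewrite /maxn; case: ifP. Qed.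

Definition decode (s k : nat) : nat :=
  nth 0%N (odflt [::] (choice.unpickle s : option (seq nat))) k.

Definition prefix_code (B x : nat -> nat) (n : nat) : nat := choice.pickle (mkseq x (B n)).

Lemma decode_prefix_code B x n k : (k < B n)%N -> decode (prefix_code B x n) k = x k.
Proof. by move=> ltkB; rewrite /decode /prefix_code choice.pickleK /= nth_mkseq. Qed.

(* Levels where [S] is too large for the target bound [b] are emptied; for the
   slaloms of interest these are finitely many. *)
Definition decode_slalom (idx b : nat -> nat) (S : slalom) : slalom := fun k =>
  if (#|` S (idx k)| <= b k)%N then [fset decode s k | s in S (idx k)] else fset0.

Lemma g_slalom_decode idx b S : g_slalom b (decode_slalom idx b S).
Proof.
move=> k; rewrite /decode_slalom; case: ifP => [|_]; last by rewrite cardfs0.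
exact/leq_trans/leq_imfset_card.
Qed.

Lemma captured_decode idx b B S x :
  (forall n k, (B n <= k)%N -> (n < idx k)%N) ->
  (exists K, forall k, (K <= k)%N -> (#|` S (idx k)| <= b k)%N) ->
  captured (prefix_code B x) S -> captured x (decode_slalom idx b S).
Proof.
move=> idxB [K small] [N capt]; exists (maxn K (B N)) => k.
rewrite geq_max => /andP[leKk leBk]; rewrite /decode_slalom small //.
have ltkB : (k < B (idx k))%N by rewrite ltnNge; apply/negP => /idxB; rewrite ltnn.
rewrite -(decode_prefix_code x ltkB); apply: in_imfset; apply: capt.
exact/ltnW/idxB.
Qed.

Lemma covering_decode (P Q : slalom -> Prop) (idx b : nat -> nat) :
  (forall n, exists K, forall k, (K <= k)%N -> (n < idx k)%N) ->
  (forall S, P S -> exists K, forall k, (K <= k)%N -> (#|` S (idx k)| <= b k)%N) ->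
  (forall S, g_slalom b S -> Q S) ->
  forall F, covering P F -> exists G, covering Q G /\ (G #<= F)%card.
Proof.
move=> /choice[B idxB] smallP bQ F [FP Fcov].
exists (decode_slalom idx b @` F)%classic; split; [split|].
- by move=> _ [S _ <-]; apply/bQ/g_slalom_decode.
- move=> x; have [S [FS capt]] := Fcov (prefix_code B x).
  exists (decode_slalom idx b S); split; first by exists S.
  by apply: captured_decode capt => //; apply/smallP/FP.
- exact: card_image_le.
Qed.

Local Open Scope ring_scope.

Lemma sum_inv_sqr_tail (R : realFieldType) (m n : nat) : (0 < m)%N ->
  \sum_(m <= k < n) ((k ^ 2)%:R : R)^-1 <= 2 / m%:R.
Proof.
move=> m_gt0; have [lenm | ltmn] := leqP n m; first by rewrite big_geq ?divr_ge0.
have telescope : \sum_(m <= k < n) (- 2 / k.+1%:R - - 2 / k%:R : R) = 2 / m%:R - 2 / n%:R.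
  by rewrite (telescope_sumr (fun k => - 2 / k%:R)) 1?ltnW //; ring.
apply: le_trans (_ : _ <= 2 / m%:R - 2 / n%:R) _; last by rewrite gerBl divr_ge0.
rewrite -telescope; apply: ler_sum_nat => k /andP[lemk _].
have k_gt0 : (0 < k)%N by apply: leq_trans lemk.
have -> : - 2 / k.+1%:R - - 2 / k%:R = 2 / (k * k.+1)%:R :> R.
  by rewrite natrM; field; rewrite nat1r !pnatr_eq0 -!lt0n k_gt0.
rewrite ler_pdivlMr ?ltr0n ?muln_gt0 ?k_gt0 // mulrC ler_pdivrMr ?ltr0n ?expn_gt0 ?k_gt0 //.
rewrite -natrM ler_nat; nia.
Qed.

Lemma sum_inv_consecutive (R : realFieldType) (n : nat) :
  \sum_(0 <= j < n) ((j.+1 * j.+2)%:R : R)^-1 <= 1.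
Proof.
have consecutive j : ((j.+1 * j.+2)%:R : R)^-1 = - j.+2%:R^-1 - - j.+1%:R^-1.
  by have := ler0n R j; rewrite natrM => ?; field; rewrite !gt_eqF //; lra.
rewrite (eq_big_nat _ _ (fun j _ => consecutive j)).
by rewrite (telescope_sumr (fun j => - j.+1%:R^-1)) // invr1 opprK gerDr oppr_le0 invr_ge0.
Qed.

Lemma in_C_card_bound (S : slalom) :
  in_C S -> exists M : nat, forall n, (0 < n)%N -> (#|` S n| <= M * n ^ 2)%N.
Proof.
move=> [M sum_le]; have M_ge0 : 0 <= M by have := sum_le 0%N; rewrite big_geq.
exists (Num.Def.archi_bound M) => n n_gt0.
have n2_gt0 : (0 : rat) < (n ^ 2)%:R by rewrite ltr0n expn_gt0 n_gt0.
suff : (#|` S n|)%:R / (n ^ 2)%:R < (Num.Def.archi_bound M)%:R :> rat.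
  by rewrite ltr_pdivrMr // -natrM ltr_nat => /ltnW.
apply: le_lt_trans (archi_boundP M_ge0); apply: le_trans (sum_le n.+1).
rewrite big_nat_recr //= lerDr.
by apply: sumr_ge0 => k _; rewrite divr_ge0.
Qed.

Lemma g_slalom_in_C (b : nat -> nat) (M : rat) (S : slalom) :
  (forall n, \sum_(1 <= k < n) (b k)%:R / (k ^ 2)%:R <= M) ->
  g_slalom b S -> in_C S.
Proof.
move=> sum_le small; exists M => n; apply: le_trans (sum_le n).
by apply: ler_sum_nat => k _; rewrite ler_wpM2r ?invr_ge0 ?ler_nat.
Qed.

Section GSlalomToC.
Variable g : nat -> nat.
Hypothesis g_pos : forall k, (0 < g k)%N.

(* Chosen so that [g j * (2 / a j) = 2 / ((j+1)(j+2))] is summable. *)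
Let a j := (g j * (j.+1 * j.+2))%N.
Let idx k := last_index (fun j => a j <= k)%N k.
Let width k := (\sum_(j < k.+1 | a j <= k) g j)%N.

Let lt_a j : (j < a j)%N.
Proof. by rewrite /a (leq_trans _ (leq_pmull _ (g_pos j))) // leq_pmulr. Qed.

Let width_widen n k : (k < n)%N -> width k = (\sum_(0 <= j < n | a j <= k) g j)%N.
Proof.
move=> ltkn; rewrite /width (big_ord_widen_cond _ (fun j => a j <= k)%N g ltkn) big_mkord.
by apply: eq_bigl => j; rewrite andb_idr // => /(leq_trans (lt_a j))/ltnW.
Qed.

Lemma weighted_width_le2 n : \sum_(1 <= k < n) (width k)%:R / (k ^ 2)%:R <= 2 :> rat.
Proof.
rewrite (eq_big_nat _ _ (_ : forall k, (1 <= k < n)%N -> (width k)%:R / (k ^ 2)%:R =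
    \sum_(0 <= j < n | (a j <= k)%N) (g j)%:R / (k ^ 2)%:R)); last first.
  by move=> k /andP[_ ltkn]; rewrite (width_widen ltkn) natr_sum mulr_suml.
rewrite (exchange_big_dep_nat xpredT) //=.
apply: (le_trans _ (_ : \sum_(0 <= j < n) 2 * ((j.+1 * j.+2)%:R : rat)^-1 <= 2)); last first.
  by rewrite -mulr_sumr -[X in _ <= X]mulr1 ler_wpM2l ?sum_inv_consecutive.
apply: ler_sum_nat => j _.
have a_gt0 : (0 < a j)%N by apply: leq_ltn_trans (lt_a j).
have tail := sum_inv_sqr_tail rat n a_gt0; rewrite (big_nat_widenl _ 1) //= in tail.
rewrite -mulr_sumr; apply: le_trans (ler_wpM2l (ler0n _ _) tail) _.
have g_neq0 : (g j)%:R != 0 :> rat by rewrite pnatr_eq0 -lt0n.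
by rewrite /a natrM invfM mulrCA mulVKf.
Qed.

Let idx_unbounded n : exists K, forall k, (K <= k)%N -> (n < idx k)%N.
Proof. by exists (n.+1 + a n.+1) => k le_k; apply: leq_last_index; lia. Qed.

Let g_idx_le_width k : (a 0 <= k)%N -> (g (idx k) <= width k)%N.
Proof.
move=> /(@last_indexP (fun j => a j <= k)%N k) a_idx.
by rewrite /width (bigD1 (Ordinal (@last_index_leq _ k : (idx k < k.+1)%N))) //= leq_addr.
Qed.

Lemma covering_g_slalom_to_C (F : set slalom) :
  covering (g_slalom g) F -> exists G, covering in_C G /\ (G #<= F)%card.
Proof.
apply: (covering_decode idx_unbounded) => [S small | S].
- by exists (a 0) => k /g_idx_le_width; apply: leq_trans.
- exact/g_slalom_in_C/weighted_width_le2.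
Qed.
End GSlalomToC.

Section CToGSlalom.
Variable g : nat -> nat.
Hypothesis g_unbounded : forall m, exists N, forall k, (N <= k)%N -> (m <= g k)%N.

(* Once [idx k] exceeds the constant [M] of [|S j| <= M j^2], we get
   [|S (idx k)| <= idx k ^ 3 <= g k]. *)
Let idx k := last_index (fun j => j ^ 3 <= g k)%N k.

Let idx_unbounded n : exists K, forall k, (K <= k)%N -> (n < idx k)%N.
Proof.
have [N le_g] := g_unbounded (n.+1 ^ 3).
exists (maxn n.+1 N) => k; rewrite geq_max => /andP[le_k le_Nk].
by apply: (@leq_last_index (fun j => j ^ 3 <= g k)%N) => //; apply: le_g.
Qed.

Lemma covering_C_to_g_slalom (G : set slalom) :
  covering in_C G -> exists F, covering (g_slalom g) F /\ (F #<= G)%card.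
Proof.
apply: (covering_decode (b := g) idx_unbounded) => // S /in_C_card_bound[M card_le].
have [K lt_idx] := idx_unbounded M; exists K => k /lt_idx lt_M.
have cube_le : (idx k ^ 3 <= g k)%N by apply: (@last_indexP (fun j => j ^ 3 <= g k)%N).
have idx_gt0 : (0 < idx k)%N by apply: leq_ltn_trans lt_M.
apply: leq_trans (card_le _ idx_gt0) (leq_trans _ cube_le).
by rewrite (expnS _ 2) leq_mul2r ltnW ?orbT.
Qed.
End CToGSlalom.

Local Open Scope card_scope.

Theorem lemma10p6 (g : nat -> nat)
  (g_pos : forall k, (0 < g k)%N)
  (g_inf : forall m, exists N, forall k, (N <= k)%N -> (m <= g k)%N) :
  (forall F : set slalom, covering (g_slalom g) F ->
     exists G : set slalom, covering in_C G /\ G #<= F) /\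
  (forall G : set slalom, covering in_C G ->
     exists F : set slalom, covering (g_slalom g) F /\ F #<= G).
Proof. by split=> [F | G]; [apply: covering_g_slalom_to_C | apply: covering_C_to_g_slalom]. Qed.
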